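(* Let $G$ be a graph and $L$ an $m$-assignment for $G$. Suppose $uv\in E(G)$, $|L(u)-L(v)|=d\ge 1$, and that for any $x\in L(u)$ and $y\in L(v)$ with $x\ne y$ there are at least $C$ proper $L$-colorings of $G$ that color $u$ with $x$ and $v$ with $y$. Then \[P(G,L)\ge P_{DP}(G,m)+Cd.\]
   Context: An $m$-assignment $L$ assigns to each vertex $w$ a set $L(w)$ of $m$ colors; $P(G,L)$ is the number of proper colorings $f$ of $G$ with $f(w)\in L(w)$ for all $w$. A DP-cover of $G$ is a pair $\mathcal{H}=(L,H)$ where $H$ is a graph and $L:V(G)\to 2^{V(H)}$ such that $\{L(v):v\in V(G)\}$ partitions $V(H)$ into $|V(G)|$ parts, for every edge $uv$ of $G$ the edges of $H$ between $L(u)$ and $L(v)$ form a matching (possibly empty, not necessarily perfect), and every edge of $H$ lies between $L(u)$ and $L(v)$ for some edge $uv\in E(G)$. It is an $m$-fold cover if $|L(v)|=m$ for all $v$. A proper $\mathcal{H}$-coloring is an independent set of $H$ containing exactly one vertex of each $L(v)$; $P_{DP}(G,\mathcal{H})$ is their number, and the DP color function $P_{DP}(G,m)$ is the minimum of $P_{DP}(G,\mathcal{H})$ over all $m$-fold covers $\mathcal{H}$ of $G$. *)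

From mathcomp Require Import all_boot.
From Stdlib Require Import ClassicalEpsilon.
Set Implicit Arguments. Unset Strict Implicit. Unset Printing Implicit Defensive.

(* A graph G is (V, e) with V : finType and e : rel V (simplicity is imposed
   by hypotheses in the theorem). *)

Definition m_assignment (V Col : finType) (L : V -> {set Col}) (m : nat) : Prop :=
  forall v, #|L v| = m.

Definition proper_L_coloring (V Col : finType) (e : rel V) (L : V -> {set Col})
  (f : {ffun V -> Col}) : bool :=
  [forall v, f v \in L v] && [forall u, forall v, e u v ==> (f u != f v)].

Definition P_list (V Col : finType) (e : rel V) (L : V -> {set Col}) : nat :=
  #|[set f : {ffun V -> Col} | proper_L_coloring e L f]|.

Definition DP_cover (V : finType) (e : rel V) (W : finType) (eH : rel W)
  (LH : V -> {set W}) : Prop :=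
  (forall x y, eH x y = eH y x) /\ (forall x, ~~ eH x x) /\
  (forall w, exists! v, w \in LH v) /\
  (* for every edge uv of G, edges of H between LH u and LH v form a matching *)
  (forall u v, e u v ->
     (forall x y y', x \in LH u -> y \in LH v -> y' \in LH v ->
        eH x y -> eH x y' -> y = y') /\
     (forall x x' y, x \in LH u -> x' \in LH u -> y \in LH v ->
        eH x y -> eH x' y -> x = x')) /\
  (forall x y, eH x y -> exists u v, [/\ e u v, x \in LH u & y \in LH v]).

Definition m_fold_cover (V : finType) (e : rel V) (W : finType) (eH : rel W)
  (LH : V -> {set W}) (m : nat) : Prop :=
  DP_cover e eH LH /\ forall v, #|LH v| = m.

Definition proper_H_coloring (V W : finType) (eH : rel W) (LH : V -> {set W})
  (I : {set W}) : bool :=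
  [forall x in I, forall y in I, ~~ eH x y] && [forall v, #|I :&: LH v| == 1].

Definition P_DP_cover (V W : finType) (eH : rel W) (LH : V -> {set W}) : nat :=
  #|[set I : {set W} | proper_H_coloring eH LH I]|.

Definition DP_value (V : finType) (e : rel V) (m n : nat) : Prop :=
  exists (W : finType) (eH : rel W) (LH : V -> {set W}),
    m_fold_cover e eH LH m /\ P_DP_cover eH LH = n.

Definition DP_value_b (V : finType) (e : rel V) (m : nat) : pred nat :=
  fun n => if excluded_middle_informative (DP_value e m n) then true else false.

(* The trivial m-fold cover (no edges) shows the set of values is nonempty. *)
Lemma DP_value_exists (V : finType) (e : rel V) (m : nat) :
  exists n, DP_value_b e m n.
Proof.
pose W := (V * 'I_m)%type.
pose LH := fun v : V => [set w : W | w.1 == v].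
exists (P_DP_cover (fun _ _ : W => false) LH).
rewrite /DP_value_b; case: excluded_middle_informative => // H; exfalso; apply: H.
exists W, (fun _ _ => false), LH; split=> //; split.
- split=> //; split=> //; split.
  + move=> [v i]; exists v; split; first by rewrite inE.
    by move=> v'; rewrite inE => /eqP.
  + by split.
- move=> v; have -> : LH v = setX [set v] [set: 'I_m].
    by apply/setP => -[a b]; rewrite !inE andbT.
  by rewrite cardsX cards1 cardsT card_ord mul1n.
Qed.

Definition P_DP (V : finType) (e : rel V) (m : nat) : nat :=
  ex_minn (DP_value_exists e m).

(* Twist the cover of G given by L along the edge uv.  Let pi be a permutation
   of the colours exchanging L u \ L v with L v \ L u and fixing all other
   colours.  The DP-cover H has vertices (w, c) with c in L w and, for every
   edge ab of G, joins (a, c) to (b, c) -- except that along uv it joins (u, c)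
   to (v, pi c).  H is an m-fold cover, and every proper H-coloring is the graph
   of a proper L-coloring f with f v <> pi (f u).  Hence P_DP(G, m) misses the
   d disjoint classes {f u = x, f v = pi x}, x in L u \ L v, of L-colorings,
   each of size at least C because pi x is a colour of L v different from x. *)

From mathcomp Require Import all_boot.
From Stdlib Require Import ClassicalEpsilon.

Set Implicit Arguments.
Unset Strict Implicit.
Unset Printing Implicit Defensive.

Lemma nth_index_transfer (T : eqType) (s t : seq T) (c : T) :
  uniq t -> size s = size t -> c \in s ->
  let c' := nth c t (index c s) in c' \in t /\ nth c' s (index c' t) = c.
Proof.
move=> t_uniq size_st cs c'.
have lt_i : index c s < size t by rewrite -size_st index_mem.
split; first exact: mem_nth.
by rewrite index_uniq // (set_nth_default c) ?size_st // nth_index.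
Qed.

Section SeqSwap.

Variables (T : eqType) (s t : seq T).

Definition seq_swap (c : T) : T :=
  if c \in s then nth c t (index c s)
  else if c \in t then nth c s (index c t) else c.

Lemma seq_swap_id c : c \notin s -> c \notin t -> seq_swap c = c.
Proof. by rewrite /seq_swap => /negbTE -> /negbTE ->. Qed.

Hypotheses (s_uniq : uniq s) (t_uniq : uniq t) (size_st : size s = size t).
Hypothesis s_notin_t : {in s, forall c, c \notin t}.

Lemma seq_swap_mem c : c \in s -> seq_swap c \in t.
Proof. by move=> cs; rewrite /seq_swap cs; apply: mem_nth; rewrite -size_st index_mem. Qed.

Lemma seq_swapK : involutive seq_swap.
Proof.
move=> c; rewrite {2}/seq_swap; case: ifPn => [cs | /negbTE cNs].
  have [c't c'K] := nth_index_transfer t_uniq size_st cs.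
  have c'Ns : nth c t (index c s) \in s = false.
    by apply/negbTE/negP => /s_notin_t; rewrite c't.
  by rewrite /seq_swap c'Ns c't.
case: ifPn => [ct | cNt]; last by rewrite seq_swap_id ?cNs.
have [c's c'K] := nth_index_transfer s_uniq (esym size_st) ct.
by rewrite /seq_swap c's.
Qed.

End SeqSwap.

Section TwistedCover.

Variables (V Col : finType) (e : rel V) (L : V -> {set Col}) (u v : V).
Variable pi : Col -> Col.

Local Notation W := {p : V * Col | p.2 \in L p.1}.

Definition fibre (a : V) : {set W} := [set p | (val p).1 == a].

Definition clash (a b : V) (c c' : Col) : bool :=
  if (a == u) && (b == v) then pi c == c'
  else if (a == v) && (b == u) then pi c' == c
  else c == c'.

Definition twisted_edge : rel W :=
  fun p q => e (val p).1 (val q).1 && clash (val p).1 (val q).1 (val p).2 (val q).2.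

Definition graph_set (f : V -> Col) : {set W} := [set p | (val p).2 == f (val p).1].

Lemma cover_vertex_eq (p q : W) : (val p).1 = (val q).1 -> (val p).2 = (val q).2 -> p = q.
Proof.
by move=> eq1 eq2; apply: val_inj; rewrite [val p]surjective_pairing eq1 eq2 -surjective_pairing.
Qed.

Lemma card_fibre a : #|fibre a| = #|L a|.
Proof.
rewrite -(@card_in_imset _ _ (fun p : W => (val p).2) (fibre a)); last first.
  by move=> p q; rewrite !inE => /eqP pa /eqP qa; apply: cover_vertex_eq; rewrite pa qa.
apply: eq_card => c; apply/imsetP/idP => [[p] | ca].
  by rewrite inE => /eqP <- ->; exact: (valP p).
by exists (exist _ (a, c) ca); rewrite ?inE.
Qed.

Lemma clash_sym a b c c' : u != v -> clash a b c c' = clash b a c' c.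
Proof.
move=> uv; rewrite /clash.
case au: (a == u); case bv: (b == v); case av: (a == v); case bu: (b == u) => //=;
  rewrite ?(eq_sym c) //.
all: by rewrite -(eqP au) (eqP av) eqxx in uv.
Qed.

Lemma clash_inj_r a b c c1 c2 :
  injective pi -> clash a b c c1 -> clash a b c c2 -> c1 = c2.
Proof.
move=> pi_inj; rewrite /clash; case: ifP => _; first by move=> /eqP <- /eqP <-.
case: ifP => _; last by move=> /eqP <- /eqP <-.
by move=> /eqP eq1 /eqP eq2; apply: pi_inj; rewrite eq1 eq2.
Qed.

Lemma clash_diag a b c :
  {in L u :&: L v, forall x, pi x = x} -> c \in L a -> c \in L b -> clash a b c c.
Proof.
move=> pi_fix ca cb; rewrite /clash.
case: ifP => [/andP[/eqP au /eqP bv] | _]; first by rewrite pi_fix // inE -au -bv ca cb.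
case: ifP => [/andP[/eqP av /eqP bu] | _] //.
by rewrite pi_fix // inE -av -bu ca cb.
Qed.

Lemma twisted_cover_m_fold m :
  (forall x y, e x y = e y x) -> (forall x, ~~ e x x) -> u != v -> injective pi ->
  m_assignment L m -> m_fold_cover e twisted_edge fibre m.
Proof.
move=> e_sym e_irr uv pi_inj HL; split; last by move=> a; rewrite card_fibre HL.
split; first by move=> p q; rewrite /twisted_edge e_sym clash_sym.
split; first by move=> p; rewrite /twisted_edge (negbTE (e_irr _)).
split.
  by move=> p; exists (val p).1; split=> [|a]; rewrite inE // => /eqP.
split; last first.
  by move=> p q /andP[epq _]; exists (val p).1, (val q).1; rewrite !inE !eqxx.
move=> a b _; split.
  move=> p q q'; rewrite !inE => /eqP pa /eqP qb /eqP q'b /andP[_].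
  rewrite pa qb => hq /andP[_]; rewrite pa q'b => hq'.
  by apply: cover_vertex_eq; rewrite ?qb ?q'b // (clash_inj_r pi_inj hq hq').
move=> p p' q; rewrite !inE => /eqP pa /eqP p'a /eqP qb /andP[_].
rewrite pa qb clash_sym // => hp /andP[_]; rewrite p'a qb clash_sym // => hp'.
by apply: cover_vertex_eq; rewrite ?pa ?p'a // (clash_inj_r pi_inj hp hp').
Qed.

Lemma transversal_graph_set (I : {set W}) :
  (forall a, #|I :&: fibre a| == 1) ->
  exists2 f : {ffun V -> Col}, (forall a, f a \in L a) & I = graph_set f.
Proof.
move=> hI.
have /fin_all_exists [g gP] : forall a, exists p : W, I :&: fibre a = [set p].
  by move=> a; apply/cards1P.
have gI a : g a \in I by have := set11 (g a); rewrite -gP inE => /andP[].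
have g1 a : (val (g a)).1 = a by have := set11 (g a); rewrite -gP !inE => /andP[_ /eqP].
exists [ffun a => (val (g a)).2] => [a | ].
  by rewrite ffunE -{2}(g1 a); exact: (valP (g a)).
apply/setP => q; rewrite inE ffunE; apply/idP/eqP => [qI | q2].
  have : q \in I :&: fibre (val q).1 by rewrite !inE qI eqxx.
  by rewrite gP => /set1P {1}->.
by rewrite (@cover_vertex_eq q (g (val q).1)) ?g1.
Qed.

Lemma clash_free_proper (f : {ffun V -> Col}) :
  e u v -> {in L u :&: L v, forall x, pi x = x} -> (forall a, f a \in L a) ->
  (forall a b, e a b -> ~~ clash a b (f a) (f b)) ->
  proper_L_coloring e L f && (pi (f u) != f v).
Proof.
move=> huv pi_fix fL hf; apply/andP; split; last first.
  by have := hf u v huv; rewrite /clash !eqxx.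
apply/andP; split; first exact/forallP.
apply/forallP => a; apply/forallP => b; apply/implyP => eab.
apply: contra (hf a b eab) => /eqP fab.
by rewrite fab; apply: clash_diag; rewrite // -fab.
Qed.

Lemma P_DP_twisted_cover_le :
  e u v -> {in L u :&: L v, forall x, pi x = x} ->
  P_DP_cover twisted_edge fibre <=
    #|[set f : {ffun V -> Col} | proper_L_coloring e L f & pi (f u) != f v]|.
Proof.
move=> huv pi_fix.
apply: (leq_trans _ (leq_imset_card (fun f : {ffun V -> Col} => graph_set f) _)).
apply: subset_leq_card; apply/subsetP => I; rewrite inE => /andP[indep hI].
have [f fL I_f] := transversal_graph_set (forallP hI).
rewrite I_f in indep *; apply/imsetP; exists f => //.
rewrite inE; apply: clash_free_proper => // a b eab.
have graph_pt x : exist _ (x, f x) (fL x) \in graph_set f by rewrite inE.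
have /forall_inP/(_ _ (graph_pt a))/forall_inP/(_ _ (graph_pt b)) := indep.
by rewrite /twisted_edge /= eab.
Qed.

End TwistedCover.

Lemma P_DP_le_cover (V W : finType) (e : rel V) (eH : rel W) (LH : V -> {set W}) m :
  m_fold_cover e eH LH m -> P_DP e m <= P_DP_cover eH LH.
Proof.
move=> cover; rewrite /P_DP; case: ex_minnP => n _; apply.
by rewrite /DP_value_b; case: excluded_middle_informative => // -[]; exists W, eH, LH.
Qed.

Lemma P_list_split (V Col : finType) (e : rel V) (L : V -> {set Col})
    (P : pred {ffun V -> Col}) :
  #|[set f | proper_L_coloring e L f & P f]| + #|[set f | proper_L_coloring e L f & ~~ P f]|
  = P_list e L.
Proof.
rewrite /P_list -(cardsID [set f | P f] [set f | proper_L_coloring e L f]).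
by congr (_ + _); apply: eq_card => f; rewrite !inE // andbC.
Qed.

Lemma matched_colorings_ge (V Col : finType) (e : rel V) (L : V -> {set Col})
    (u v : V) (pi : Col -> Col) (C : nat) :
  {in L u :\: L v, forall x, pi x \in L v} ->
  (forall x y, x \in L u -> y \in L v -> x != y ->
     C <= #|[set f : {ffun V -> Col} | proper_L_coloring e L f && (f u == x) && (f v == y)]|) ->
  C * #|L u :\: L v| <=
    #|[set f : {ffun V -> Col} | proper_L_coloring e L f & pi (f u) == f v]|.
Proof.
move=> piA hC; set A := L u :\: L v.
have -> : C * #|A| = \sum_(x in A) C by rewrite sum_nat_const mulnC.
rewrite -sum1_card (bigID (fun f : {ffun V -> Col} => f u \in A)) /=.
rewrite (partition_big (fun f : {ffun V -> Col} => f u) (mem A)) /=; last by move=> f /andP[].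
apply: (leq_trans _ (leq_addr _ _)); apply: leq_sum => x xA.
have := xA; rewrite inE => /andP[xNv xu]; have pxv := piA x xA.
apply: leq_trans (hC x (pi x) xu pxv _) _; first by apply: contraNneq xNv => ->.
rewrite sum1dep_card; apply: subset_leq_card; apply/subsetP => f.
by rewrite !inE => /andP[/andP[pf /eqP fu] /eqP fv]; rewrite pf fu fv xNv xu !eqxx.
Qed.

Theorem lemma22 (V Col : finType) (e : rel V)
  (e_sym : forall x y, e x y = e y x) (e_irr : forall x, ~~ e x x)
  (L : V -> {set Col}) (m : nat) (HL : m_assignment L m)
  (u v : V) (huv : e u v) (d C : nat)
  (hd : #|L u :\: L v| = d) (hd1 : 1 <= d)
  (hC : forall x y, x \in L u -> y \in L v -> x != y ->
     C <= #|[set f : {ffun V -> Col} | proper_L_coloring e L f && (f u == x) && (f v == y)]|) :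
  P_DP e m + C * d <= P_list e L.
Proof.
have uv : u != v by apply: contraTneq huv => ->; exact: e_irr.
set A := L u :\: L v; set B := L v :\: L u.
have size_AB : size (enum A) = size (enum B).
  by rewrite -!cardE !cardsD [L v :&: _]setIC !HL.
have A_notin_B : {in enum A, forall c, c \notin enum B}.
  by move=> c; rewrite !mem_enum !inE => /andP[_ ->].
pose pi := seq_swap (enum A) (enum B).
have pi_inj : injective pi.
  exact: can_inj (seq_swapK (enum_uniq _) (enum_uniq _) size_AB A_notin_B).
have pi_fix : {in L u :&: L v, forall x, pi x = x}.
  by move=> c; rewrite inE => /andP[cu cv]; apply: seq_swap_id; rewrite mem_enum !inE ?cu ?cv.
have piA : {in A, forall x, pi x \in L v}.
  move=> c cA; have /(seq_swap_mem size_AB) : c \in enum A by rewrite mem_enum.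
  by rewrite mem_enum inE => /andP[].
rewrite -hd -(P_list_split e L (fun f => pi (f u) == f v)) [leqRHS]addnC.
apply: leq_add (matched_colorings_ge piA hC).
apply: (leq_trans _ (P_DP_twisted_cover_le huv pi_fix)).
exact: P_DP_le_cover (twisted_cover_m_fold e_sym e_irr uv pi_inj HL).
Qed.
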